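(* Let $I$ be an $\mathfrak m$-primary ideal of $R$ and let $r>0$ with $\mathfrak m^r\subset I$. Then for all integers $k,m\ge r$, $I^{(m)}/A^{(m)}=I^{(k)}/A^{(k)}$ as elements of the Grothendieck group $\mathbf G(X)$.
   Context: $\mathbf{k}$ is algebraically closed; $X\subset\mathbb{A}^N$ is an affine variety over $\mathbf k$ (possibly reducible) whose irreducible components $X_1,\ldots,X_r$ all have dimension $n$, containing the origin $o$; $R=\mathcal O_{X,o}$ with maximal ideal $\mathfrak m$. $A^{(m)}\subset R$: restrictions to $X$ of polynomials of degree $\le m$; $I^{(m)}=A^{(m)}\cap I$. $\mathbf K(X)$: finite-dimensional $\mathbf k$-subspaces of the algebra $\mathbf k(X)$ of rational functions with nonzero restriction to each $X_i$, identified when their restrictions to each $X_i$ coincide; a commutative semigroup under $LM=\operatorname{span}\{fg\}$. $\mathbf G(X)$: its Grothendieck group, i.e. formal quotients of $\mathbf K(X)/\!\sim$ where $L\sim M$ iff $LN=MN$ for some $N\in\mathbf K(X)$. *)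

From HB Require Import structures.
From mathcomp Require Import all_boot all_algebra.
From mathcomp Require Import mpoly.

Set Implicit Arguments.
Unset Strict Implicit.
Unset Printing Implicit Defensive.

Import GRing.Theory.
Local Open Scope ring_scope.

Section Defs.
Variables (k : closedFieldType) (N : nat).

Definition point := 'I_N -> k.
Definition poly := {mpoly k[N]}.
Definition origin : point := fun _ => 0.

Definition vanishes_on (X : point -> Prop) (p : poly) : Prop :=
  forall x, X x -> p.@[x] = 0.

Definition algebraic_set (X : point -> Prop) : Prop :=
  exists S : poly -> Prop, forall x, X x <-> (forall p, S p -> p.@[x] = 0).

(* an affine variety in the (possibly reducible) sense of the paper *)
Definition affine_variety (X : point -> Prop) : Prop := algebraic_set X.

Definition subset_pts (Y Z : point -> Prop) : Prop := forall x, Y x -> Z x.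
Definition proper_subset_pts (Y Z : point -> Prop) : Prop :=
  subset_pts Y Z /\ exists x, Z x /\ ~ Y x.

Definition irreducible_set (Y : point -> Prop) : Prop :=
  [/\ algebraic_set Y, exists x, Y x &
      forall Z1 Z2, algebraic_set Z1 -> algebraic_set Z2 ->
        (forall x, Y x -> Z1 x \/ Z2 x) ->
        subset_pts Y Z1 \/ subset_pts Y Z2].

Definition irreducible_component (X Y : point -> Prop) : Prop :=
  [/\ irreducible_set Y, subset_pts Y X &
      forall Z, irreducible_set Z -> subset_pts Y Z -> subset_pts Z X ->
        subset_pts Z Y].

Definition chain_in (Y : point -> Prop) (d : nat) : Prop :=
  exists Z : nat -> point -> Prop,
    (forall i, (i <= d)%N -> irreducible_set (Z i) /\ subset_pts (Z i) Y) /\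
    (forall i, (i < d)%N -> proper_subset_pts (Z i) (Z i.+1)).

Definition dim_eq (Y : point -> Prop) (n : nat) : Prop :=
  chain_in Y n /\ ~ chain_in Y n.+1.

(* An element of R is represented by a fraction f/g of polynomials with
   g(o) <> 0; two fractions define the same element of R iff
   h (f g' - f' g) vanishes on X for some h with h(o) <> 0. *)
Definition pfrac := (poly * poly)%type.

Definition is_germ (a : pfrac) : Prop := a.2.@[origin] != 0.

Definition germ_eq (X : point -> Prop) (a b : pfrac) : Prop :=
  exists h : poly, h.@[origin] != 0 /\ vanishes_on X (h * (a.1 * b.2 - b.1 * a.2)).

Definition frac_add (a b : pfrac) : pfrac := (a.1 * b.2 + b.1 * a.2, a.2 * b.2).
Definition frac_mul (a b : pfrac) : pfrac := (a.1 * b.1, a.2 * b.2).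
Definition frac_one : pfrac := (1, 1).
Definition frac_zero : pfrac := (0, 1).
Definition frac_pow (a : pfrac) (e : nat) : pfrac := iter e (frac_mul a) frac_one.

(* I : an ideal of R, given as the set of fractions representing its elements *)
Definition local_ideal (X : point -> Prop) (I : pfrac -> Prop) : Prop :=
  [/\ forall a, I a -> is_germ a,
      forall a b, I a -> is_germ b -> germ_eq X a b -> I b,
      I frac_zero,
      forall a b, I a -> I b -> I (frac_add a b) &
      forall a b, is_germ a -> I b -> I (frac_mul a b)].

Definition max_germ (a : pfrac) : Prop := is_germ a /\ a.1.@[origin] = 0.

Definition primary_ideal (X : point -> Prop) (I : pfrac -> Prop) : Prop :=
  [/\ local_ideal X I, ~ I frac_one &
      forall a b, is_germ a -> is_germ b -> I (frac_mul a b) ->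
        I a \/ exists e, I (frac_pow b e)].

Definition m_primary (X : point -> Prop) (I : pfrac -> Prop) : Prop :=
  primary_ideal X I /\ forall a, (exists e, I (frac_pow a e)) <-> max_germ a.

(* m^r is contained in I: every product of r elements of m lies in I
   (m^r is the ideal generated by such products) *)
Definition mpow_sub (I : pfrac -> Prop) (r : nat) : Prop :=
  forall s : seq pfrac, size s = r -> (forall a, a \in s -> max_germ a) ->
    I (foldr frac_mul frac_one s).

(* total ring of fractions of k[X] = k[x]/I(X): fractions f/g with g a
   non-zero-divisor of k[X]; f/g = f'/g' iff f g' - f' g vanishes on X. *)
Definition nonzerodivisor (X : point -> Prop) (g : poly) : Prop :=
  forall h, vanishes_on X (g * h) -> vanishes_on X h.

Definition is_ratfun (X : point -> Prop) (a : pfrac) : Prop := nonzerodivisor X a.2.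

Definition rat_eq (X : point -> Prop) (a b : pfrac) : Prop :=
  vanishes_on X (a.1 * b.2 - b.1 * a.2).

Definition frac_scale (c : k) (a : pfrac) : pfrac := (c *: a.1, a.2).

Definition lin_comb (s : seq (k * pfrac)) : pfrac :=
  foldr (fun cb acc => frac_add (frac_scale cb.1 cb.2) acc) frac_zero s.

Definition in_span (X : point -> Prop) (S : pfrac -> Prop) (a : pfrac) : Prop :=
  exists s : seq (k * pfrac), (forall cb, cb \in s -> S cb.2) /\ rat_eq X a (lin_comb s).

Definition span_eq (X : point -> Prop) (S T : pfrac -> Prop) : Prop :=
  forall a, is_ratfun X a -> (in_span X S a <-> in_span X T a).

(* generating set of the product L M N = span{f g h} *)
Definition prod3 (L M P : pfrac -> Prop) : pfrac -> Prop :=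
  fun c => exists a b d, [/\ L a, M b, P d & c = frac_mul (frac_mul a b) d].

(* a finite-dimensional subspace (given by a finite spanning list) belonging
   to K(X): made of rational functions, with nonzero restriction to every
   irreducible component of X *)
Definition in_KX (X : point -> Prop) (P : seq pfrac) : Prop :=
  (forall a, a \in P -> is_ratfun X a) /\
  forall Y, irreducible_component X Y -> exists a, a \in P /\ ~ vanishes_on Y a.1.

(* L/M = L'/M' in the Grothendieck group G(X): L M' N = L' M N for some N in K(X) *)
Definition G_eq (X : point -> Prop) (L M L' M' : pfrac -> Prop) : Prop :=
  exists P : seq pfrac, in_KX X P /\
    span_eq X (prod3 L M' (fun a => a \in P)) (prod3 L' M (fun a => a \in P)).

(* A^(m): restrictions to X of polynomials of degree <= m *)
Definition Aspace (m : nat) : pfrac -> Prop :=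
  fun a => exists f : poly, [/\ (msize f <= m.+1)%N & a = (f, 1)].

Definition Ispace (I : pfrac -> Prop) (m : nat) : pfrac -> Prop :=
  fun a => exists f : poly, [/\ (msize f <= m.+1)%N, I (f, 1) & a = (f, 1)].

End Defs.

(* Multiplying by span{1}, it suffices that I^(m) A^(l) = I^(l) A^(m) for
   m, l >= r.  Both sides equal I^(m+l): the inclusion into it is clear, and
   conversely, as m^r lies in I, every monomial of degree >= r lies in I, so
   a polynomial of degree <= m + l in I splits into monomials of degree >= r,
   each a product of a monomial of degree between r and m with one of degree
   <= l, plus a remainder of degree < r, which is itself in I^(m). *)
From Pilot Require Import Defs.
From mathcomp Require Import all_boot all_algebra.
From mathcomp Require Import mpoly.
From mathcomp Require Import zify.

Set Implicit Arguments.
Unset Strict Implicit.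
Unset Printing Implicit Defensive.

Import GRing.Theory.
Local Open Scope ring_scope.

Section LinearSpan.
Variables (K : pzRingType) (V : lmodType K).

Definition lin_span (Q : V -> Prop) (v : V) : Prop :=
  exists s : seq (K * V),
    (forall cq, cq \in s -> Q cq.2) /\ v = \sum_(cq <- s) cq.1 *: cq.2.

Variable Q : V -> Prop.

Lemma lin_span0 : lin_span Q 0.
Proof. by exists [::]; rewrite big_nil. Qed.

Lemma lin_spanD u v : lin_span Q u -> lin_span Q v -> lin_span Q (u + v).
Proof.
move=> [s [Hs ->]] [t [Ht ->]]; exists (s ++ t); split; last by rewrite big_cat.
by move=> cq; rewrite mem_cat => /orP [/Hs|/Ht].
Qed.

Lemma lin_spanZ c v : lin_span Q v -> lin_span Q (c *: v).
Proof.
move=> [s [Hs ->]]; exists [seq (c * cq.1, cq.2) | cq <- s]; split.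
  by move=> cq /mapP [x /Hs ? ->].
by rewrite big_map scaler_sumr; apply: eq_bigr => x _; rewrite scalerA.
Qed.

Lemma lin_span_mem v : Q v -> lin_span Q v.
Proof.
move=> Qv; exists [:: (1, v)]; split; last by rewrite big_seq1 scale1r.
by move=> cq; rewrite inE => /eqP ->.
Qed.

Lemma lin_span_sum (T : eqType) (s : seq T) (P : pred T) (F : T -> V) :
  (forall i, i \in s -> P i -> lin_span Q (F i)) ->
  lin_span Q (\sum_(i <- s | P i) F i).
Proof.
move=> HF; rewrite big_seq_cond; apply: big_ind; [exact: lin_span0 | exact: lin_spanD |].
by move=> i /andP [si Pi]; apply: HF.
Qed.

Lemma lin_span_min (S : V -> Prop) :
  S 0 -> (forall u v, S u -> S v -> S (u + v)) -> (forall c v, S v -> S (c *: v)) ->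
  (forall v, Q v -> S v) -> forall v, lin_span Q v -> S v.
Proof.
move=> S0 SD SZ QS _ [s [Hs ->]]; rewrite big_seq.
by apply: big_ind => // cq /Hs /QS; apply: SZ.
Qed.

End LinearSpan.

Section Monomials.
Variable N : nat.

Lemma mnm_sum_U (e : 'X_{1..N}) :
  exists t : seq 'I_N, e = (\sum_(i <- t) U_(i))%MM /\ size t = mdeg e.
Proof.
move: {2}(mdeg e) (erefl (mdeg e)) => d; elim: d e => [|d IH] e De.
  by exists [::]; rewrite big_nil; split=> //; apply/eqP; rewrite -mdeg_eq0 De.
have [i ei] : exists i, e i != 0%N.
  case: (pickP (fun i => e i != 0%N)) => [i ei|e0]; first by exists i.
  suff e_eq0 : e = 0%MM by move: De; rewrite e_eq0 mdeg0.
  by apply/mnmP => i; rewrite mnm0E; apply/eqP/negbFE/e0.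
have Ui_le : (U_(i) <= e)%MM by rewrite lep1mP.
have De' : mdeg (e - U_(i))%MM = d.
  by move: De; rewrite -{1}(submK Ui_le) mdegD mdeg1 addn1 => -[].
have [t [Et St]] := IH _ De'.
exists (i :: t); split; last by rewrite /= St De'.
by rewrite big_cons -{1}(submK Ui_le) Et addmC.
Qed.

Lemma mnm_split_deg (e : 'X_{1..N}) j : (j <= mdeg e)%N ->
  exists c d : 'X_{1..N}, e = (c + d)%MM /\ mdeg c = j.
Proof.
move=> le_j; have [t [Et St]] := mnm_sum_U e.
exists (\sum_(i <- take j t) U_(i))%MM, (\sum_(i <- drop j t) U_(i))%MM.
rewrite -big_cat cat_take_drop mdeg_sum; split=> //.
under eq_bigr do rewrite mdeg1.
by rewrite sum1_size size_take St; case: ltngtP le_j => // ->.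
Qed.

End Monomials.

Section DegreeTruncatedIdeal.
Variables (k : closedFieldType) (N : nat) (X : point k N -> Prop).
Variables (I : pfrac k N -> Prop) (r : nat).
Hypotheses (I_ideal : local_ideal X I) (mpow_r_sub : mpow_sub I r).

Lemma germ_eq_cross (a b : pfrac k N) : a.1 * b.2 = b.1 * a.2 -> germ_eq X a b.
Proof.
move=> Eab; exists 1; split; first by rewrite meval1 oner_neq0.
by move=> x _; rewrite Eab subrr mulr0 meval0.
Qed.

Lemma is_germ_frac1 (f : Defs.poly k N) : is_germ (f, 1).
Proof. by rewrite /is_germ meval1 oner_neq0. Qed.

Lemma ideal_frac1D f g : I (f, 1) -> I (g, 1) -> I (f + g, 1).
Proof.
case: I_ideal => _ Ieq _ Iadd _ If Ig.
apply: Ieq (Iadd _ _ If Ig) (is_germ_frac1 _) _.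
by apply: germ_eq_cross; rewrite /= !mulr1.
Qed.

Lemma ideal_frac1M f g : I (g, 1) -> I (f * g, 1).
Proof.
case: I_ideal => _ Ieq _ _ Imul Ig.
apply: Ieq (Imul _ _ (is_germ_frac1 f) Ig) (is_germ_frac1 _) _.
by apply: germ_eq_cross; rewrite /= !mulr1.
Qed.

Lemma ideal_frac1Z c g : I (g, 1) -> I (c *: g, 1).
Proof. by rewrite -mulr_algl; apply: ideal_frac1M. Qed.

Lemma ideal_frac1_0 : I (0, 1).
Proof. by case: I_ideal. Qed.

Lemma ideal_frac1B f g : I (f, 1) -> I (g, 1) -> I (f - g, 1).
Proof. by move=> If Ig; rewrite -scaleN1r; apply/ideal_frac1D/ideal_frac1Z. Qed.

Lemma ideal_frac1X (e : 'X_{1..N}) : (r <= mdeg e)%N -> I ('X_[e], 1).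
Proof.
move=> /mnm_split_deg [c [d [-> deg_c]]].
have [t [Et St]] := mnm_sum_U c.
rewrite mpolyXD mulrC; apply: ideal_frac1M.
have -> : ('X_[c], 1) = foldr (@frac_mul k N) (@frac_one k N)
                                [seq ('X_[U_(i)], 1) | i <- t].
  rewrite Et -mprodXE; elim: t {Et St} => [|i t IH]; first by rewrite big_nil.
  by rewrite big_cons /= -IH /frac_mul /= mul1r.
apply: mpow_r_sub; first by rewrite size_map St.
move=> a /mapP [i _ ->]; split; first exact: is_germ_frac1.
by rewrite /= mevalX (bigD1 i) //= mnm1E eqxx expr1 /origin mul0r.
Qed.

(* [Ideg d] and [IAprod m l] are the polynomial representatives of I^(d)
   and of the generators f g of I^(m) A^(l). *)
Definition Ideg (d : nat) (p : Defs.poly k N) : Prop :=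
  (msize p <= d.+1)%N /\ I (p, 1).

Definition IAprod (m l : nat) (p : Defs.poly k N) : Prop :=
  exists f g, [/\ Ideg m f, (msize g <= l.+1)%N & p = f * g].

Lemma msizeM_leD (f g : Defs.poly k N) m l :
  (msize f <= m.+1)%N -> (msize g <= l.+1)%N -> (msize (f * g) <= (m + l).+1)%N.
Proof.
have [->|f0] := eqVneq f 0; first by rewrite mul0r msize0.
have [->|g0] := eqVneq g 0; first by rewrite mulr0 msize0.
move=> sf sg; rewrite msizeM //; move: (leq_add sf sg); rewrite addSn addnS.
by case: (_ + _)%N.
Qed.

Lemma lin_span_Ideg d p : lin_span (Ideg d) p -> Ideg d p.
Proof.
apply: lin_span_min => //.
- by split; [rewrite msize0 | exact: ideal_frac1_0].
- move=> u v [su Iu] [sv Iv]; split; last exact: ideal_frac1D.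
  by apply: leq_trans (msizeD_le _ _) _; rewrite geq_max su sv.
- move=> c v [sv Iv]; split; last exact: ideal_frac1Z.
  exact: leq_trans (msizeZ_le _ _) sv.
Qed.

Lemma IAprod_Ideg m l p : IAprod m l p -> Ideg (m + l) p.
Proof.
move=> [f [g [[sf If] sg ->]]]; split; first exact: msizeM_leD.
by rewrite mulrC; apply: ideal_frac1M.
Qed.

Lemma IAprodX m l (e : 'X_{1..N}) :
  (r <= m)%N -> (r <= mdeg e <= m + l)%N -> IAprod m l 'X_[e].
Proof.
move=> le_rm /andP [le_re le_eml].
have /mnm_split_deg [c [d [Ecd deg_c]]] : (maxn r (mdeg e - l) <= mdeg e)%N.
  by rewrite geq_max le_re leq_subr.
have deg_d : mdeg d = (mdeg e - maxn r (mdeg e - l))%N.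
  by have := congr1 (@mdeg N) Ecd; rewrite mdegD deg_c; lia.
exists 'X_[c], 'X_[d]; split; last by rewrite Ecd mpolyXD.
- split; last by apply: ideal_frac1X; rewrite deg_c leq_maxl.
  by rewrite msizeX deg_c ltnS geq_max le_rm; lia.
- by rewrite msizeX deg_d ltnS; lia.
Qed.

Lemma Ideg_IAprod m l p : (r <= m)%N -> Ideg (m + l) p -> lin_span (IAprod m l) p.
Proof.
move=> le_rm [sp Ip].
have := mpolyE p; rewrite (bigID (fun a => r <= mdeg a)%N) /=.
set ph := \sum_(a <- _ | _) _; set pl := \sum_(a <- _ | _) _ => Ep.
have Iph : I (ph, 1).
  rewrite /ph big_seq_cond; apply: (big_ind (fun q => I (q, 1))).
  - exact: ideal_frac1_0.
  - exact: ideal_frac1D.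
  - by move=> a /andP [_ le_ra]; apply/ideal_frac1Z/ideal_frac1X.
have pl_Ideg : Ideg m pl.
  split; last first.
    have -> : pl = p - ph by rewrite Ep addrAC subrr add0r.
    exact: ideal_frac1B.
  rewrite /pl big_seq_cond; apply: (big_ind (fun q => msize q <= m.+1)%N).
  - by rewrite msize0.
  - by move=> u v su sv; apply: leq_trans (msizeD_le _ _) _; rewrite geq_max su sv.
  - move=> a /andP [_ lt_ar]; apply: leq_trans (msizeZ_le _ _) _.
    by rewrite msizeX -ltnNge in lt_ar *; lia.
rewrite Ep; apply: lin_spanD.
- apply: lin_span_sum => a pa le_ra; apply/lin_spanZ/lin_span_mem/IAprodX => //.
  by rewrite le_ra -ltnS (leq_trans (msize_mdeg_lt pa) sp).
- by apply: lin_span_mem; exists pl, 1; rewrite mulr1 msize1.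
Qed.

Lemma lin_span_IAprod m l p :
  (r <= m)%N -> lin_span (IAprod m l) p <-> Ideg (m + l) p.
Proof.
move=> le_rm; split; last exact: Ideg_IAprod.
move=> /(lin_span_min (S := lin_span (Ideg (m + l)))) span_p.
apply/lin_span_Ideg/span_p; [exact: lin_span0 | exact: lin_spanD |
  exact: lin_spanZ | by move=> q /IAprod_Ideg /lin_span_mem].
Qed.

End DegreeTruncatedIdeal.

Section PolynomialFractions.
Variables (k : closedFieldType) (N : nat) (X : point k N -> Prop).

Lemma lin_comb_frac1 (s : seq (k * pfrac k N)) :
  (forall cb, cb \in s -> cb.2.2 = 1) ->
  lin_comb s = (\sum_(cb <- s) cb.1 *: cb.2.1, 1).
Proof.
elim: s => [|cb s IH] s_frac1; first by rewrite big_nil.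
rewrite /= IH => [|x sx]; last by apply: s_frac1; rewrite inE sx orbT.
by rewrite big_cons /frac_add /frac_scale /= s_frac1 ?mem_head // !mulr1.
Qed.

Lemma in_span_frac1 (Q : Defs.poly k N -> Prop) (S : pfrac k N -> Prop) :
  (forall b, S b <-> exists p, Q p /\ b = (p, 1)) ->
  forall a, in_span X S a <-> exists p, lin_span Q p /\ Defs.rat_eq X a (p, 1).
Proof.
move=> S_frac1 a; split.
- move=> [s [sS a_eq]].
  have s_frac1 cb : cb \in s -> cb.2.2 = 1.
    by move=> /sS /S_frac1 [p [_ ->]].
  rewrite lin_comb_frac1 // in a_eq; eexists; split; last exact: a_eq.
  exists [seq (cb.1, cb.2.1) | cb <- s]; split; last by rewrite big_map.
  by move=> _ /mapP [cb /sS /S_frac1 [p [Qp ->]] ->].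
- move=> [_ [[s [sQ ->]] a_eq]].
  exists [seq (cq.1, (cq.2, 1)) | cq <- s]; split.
    by move=> _ /mapP [cq /sQ Qq ->]; apply/S_frac1; exists cq.2.
  by rewrite lin_comb_frac1 ?big_map // => _ /mapP [cq _ ->].
Qed.

Lemma in_KX_frac_one : in_KX X [:: frac_one k N].
Proof.
split=> [a | Y [[_ [x Yx] _] _ _]].
  by rewrite inE => /eqP -> h; rewrite mul1r.
exists (frac_one k N); split; first exact: mem_head.
by move=> /(_ x Yx) /eqP; rewrite meval1 oner_eq0.
Qed.

Lemma prod3_frac_one (I : pfrac k N -> Prop) m l b :
  prod3 (Ispace I m) (@Aspace k N l) (fun a => a \in [:: frac_one k N]) b <->
  exists p, IAprod I m l p /\ b = (p, 1).
Proof.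
split.
- move=> [_ [_ [d [[f [sf If ->]] [g [sg ->]] d1 ->]]]].
  move: d1; rewrite inE => /eqP ->.
  by exists (f * g); split; [exists f, g | rewrite /frac_mul /= !mulr1].
- move=> [_ [[f [g [[sf If] sg ->]]] ->]].
  exists (f, 1), (g, 1), (frac_one k N); split; first by exists f.
  + by exists g.
  + exact: mem_head.
  + by rewrite /frac_mul /= !mulr1.
Qed.

End PolynomialFractions.

Theorem corollary2p5 (k : closedFieldType) (N n : nat)
  (X : point k N -> Prop) (I : pfrac k N -> Prop) (r : nat) :
  affine_variety X ->
  X (@origin k N) ->
  (forall Y, irreducible_component X Y -> dim_eq Y n) ->
  m_primary X I ->
  (0 < r)%N ->
  mpow_sub I r ->
  forall m l : nat, (r <= m)%N -> (r <= l)%N ->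
    G_eq X (Ispace I m) (@Aspace k N m) (Ispace I l) (@Aspace k N l).
Proof.
move=> _ _ _ [[I_ideal _ _] _] _ mpow_r_sub m l le_rm le_rl.
exists [:: frac_one k N]; split; first exact: in_KX_frac_one.
move=> a _; rewrite !(in_span_frac1 _ (prod3_frac_one I _ _)).
have IAprod_sym p : lin_span (IAprod I m l) p <-> lin_span (IAprod I l m) p.
  by rewrite !(lin_span_IAprod I_ideal mpow_r_sub) // addnC.
by split=> -[p [span_p a_p]]; exists p; split=> //; apply/IAprod_sym.
Qed.
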